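(* Let $m\ge1$, $y\in\mathbb{R}^{2m+1}_+$ with $c:=\sqrt{\sum_{i=0}^{2m}y_i}>0$, and let $(x^t)_{t\ge0}$ be generated by $$x^{t+1}_j=x^t_j\,\frac1c\sum_{\ell=0}^m\frac{x^t_\ell\,y_{\ell+j}}{(x^t*x^t)_{\ell+j}},\qquad j=0,\dots,m,$$ from an initial $x^0\in\mathbb{R}^{m+1}_+$. Then $\mathcal{I}(y\|x^\infty*x^\infty)$ takes the same value for all limit points $x^\infty$ of $(x^t)$.
   Context: For $x\in\mathbb{R}^{m+1}$ set $x_k=0$ for $k<0$, $k>m$, and $(x*x)_i=\sum_{j=0}^i x_{i-j}x_j$ for $i=0,\dots,2m$. $\mathcal{I}(y\|v)=\sum_{i}\big(y_i\log\frac{y_i}{v_i}-y_i+v_i\big)$ (convention $0\log0=0$; $+\infty$ if some $y_i>0=v_i$). The iteration is assumed well-defined (denominators positive, e.g. $x^0>0$). *)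

From HB Require Import structures.
From mathcomp Require Import all_boot all_order all_algebra.
From mathcomp Require Import all_classical all_reals all_analysis.
Set Implicit Arguments. Unset Strict Implicit. Unset Printing Implicit Defensive.
Import Order.TTheory GRing.Theory Num.Theory.
Import numFieldNormedType.Exports.
Local Open Scope ring_scope.
Local Open Scope classical_set_scope.

Section Defs.
Variable R : realType.

Definition ext (n : nat) (x : 'I_n -> R) (k : nat) : R :=
  match insub k with Some i => x i | None => 0 end.

Definition convsq (m : nat) (x : 'I_m.+1 -> R) (i : nat) : R :=
  \sum_(j < i.+1) ext x (i - j) * ext x j.

Definition Idiv (n : nat) (y v : 'I_n -> R) : \bar R :=
  if [exists i, (0 < y i) && (v i == 0)] then +oo%E
  else (\sum_i ((if y i == 0 then 0 else y i * ln (y i / v i)) - y i + v i))%:E.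

Definition seq_limit_point (m : nat) (x : nat -> 'I_m.+1 -> R) (a : 'I_m.+1 -> R) : Prop :=
  exists phi : nat -> nat, (forall k, (phi k < phi k.+1)%N) /\
    forall j, (fun k => x (phi k) j) @ \oo --> a j.
End Defs.

(* The I-divergence F(x) := I(y || x*x) is a Lyapunov function of the iteration.
   With a_jl := y_(j+l) x_j x_l / (x*x)_(j+l) the update reads c x'_j = sum_l a_jl.
   Gibbs' inequality between a and the analogous weights built from x' (both have
   mass c^2), and once more between x' and x rescaled to mass c, gives
   F(x') <= F(x), so F(x^t) decreases to a limit L.  Along a subsequence tending
   to a limit point a, the bound on F keeps (a*a)_i > 0 wherever y_i > 0; F is
   continuous there, hence F(a) = L. *)

From HB Require Import structures.
From mathcomp Require Import all_boot all_order all_algebra.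
From mathcomp Require Import all_classical all_reals all_analysis.
From mathcomp Require Import ring lra zify.
Import Order.TTheory GRing.Theory Num.Theory.
Import numFieldNormedType.Exports.
Local Open Scope ring_scope.
Local Open Scope classical_set_scope.
Set Implicit Arguments.
Unset Strict Implicit.

Section Convolution.
Variable R : realType.

Lemma ext_ord n (x : 'I_n -> R) (i : 'I_n) : ext x i = x i.
Proof. by rewrite /ext valK. Qed.

Lemma ext_out n (x : 'I_n -> R) k : (n <= k)%N -> ext x k = 0.
Proof. by move=> h; rewrite /ext insubN // -leqNgt. Qed.

Lemma ext_ge0 n (x : 'I_n -> R) k : (forall i, 0 <= x i) -> 0 <= ext x k.
Proof. by move=> h; rewrite /ext; case: insub. Qed.

Lemma ext_sum n (x : 'I_n -> R) k :
  ext x k = \sum_(i < n) (if (i : nat) == k then x i else 0).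
Proof.
rewrite -big_mkcond /=; case: (ltnP k n) => hk.
  rewrite (big_pred1 (Ordinal hk)) => [|i]; last by rewrite /= -val_eqE.
  exact: (ext_ord x (Ordinal hk)).
by rewrite ext_out // big_pred0 // => i; apply/negbTE; rewrite neq_ltn (leq_trans _ hk).
Qed.

Lemma ltn_add_ord m (j l : 'I_m.+1) : (j + l < m.*2.+1)%N.
Proof. by rewrite ltnS -addnn leq_add // -ltnS. Qed.

Variable m : nat.
Implicit Types x : 'I_m.+1 -> R.

Lemma convsq_pairs x k :
  convsq x k = \sum_(j < m.+1) \sum_(l < m.+1) (if (j + l == k)%N then x j * x l else 0).
Proof.
rewrite exchange_big /=.
transitivity (\sum_(l < m.+1) (if (l <= k)%N then ext x (k - l) * ext x l else 0)).
  pose g l := ext x (k - l) * ext x l.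
  rewrite /convsq (big_ord_widen (k.+1 + m.+1) g) ?leq_addr //.
  rewrite (big_ord_widen (k.+1 + m.+1) (fun l => if (l <= k)%N then g l else 0)) ?leq_addl //.
  rewrite big_mkcond [RHS]big_mkcond; apply: eq_bigr => i _; rewrite ltnS.
  by case: (leqP i k); case: (ltnP i m.+1) => // him _; rewrite /g (ext_out x him) mulr0.
apply: eq_bigr => l _; case: leqP => hl.
  rewrite ext_sum ext_ord mulr_suml; apply: eq_bigr => j _.
  have -> : (j + l == k)%N = (j == k - l :> nat)%N by apply/eqP/eqP; lia.
  by case: eqP; rewrite ?mul0r.
by rewrite big1 // => j _; case: eqP => // e; move: hl; lia.
Qed.

Lemma sum_mul_convsq x (f : nat -> R) :
  \sum_(i < m.*2.+1) f i * convsq x i =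
  \sum_(j < m.+1) \sum_(l < m.+1) f (j + l)%N * (x j * x l).
Proof.
under eq_bigr do rewrite convsq_pairs mulr_sumr.
rewrite exchange_big /=; apply: eq_bigr => j _.
under eq_bigr do rewrite mulr_sumr.
rewrite exchange_big /=; apply: eq_bigr => l _.
rewrite (bigD1 (Ordinal (ltn_add_ord j l))) //= eqxx big1 ?addr0 // => i ne.
by case: eqP => [e|]; [case/eqP: ne; apply: val_inj | rewrite mulr0].
Qed.

Lemma sum_convsq x : \sum_(i < m.*2.+1) convsq x i = (\sum_j x j) ^+ 2.
Proof.
rewrite -(eq_bigr _ (fun (i : 'I_m.*2.+1) _ => mul1r (convsq x i))).
rewrite (sum_mul_convsq x (fun=> 1)) expr2 mulr_suml; apply: eq_bigr => j _.
by rewrite mulr_sumr; apply: eq_bigr => l _; rewrite mul1r.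
Qed.

Lemma sum_ratio_convsq (y : 'I_(m.*2.+1) -> R) x :
  (forall i : 'I_(m.*2.+1), 0 < convsq x i) ->
  \sum_(j < m.+1) \sum_(l < m.+1) ext y (j + l) / convsq x (j + l) * (x j * x l) = \sum_i y i.
Proof.
move=> hv; rewrite -(sum_mul_convsq x (fun k => ext y k / convsq x k)).
by apply: eq_bigr => i _; rewrite ext_ord divfK // gt_eqF.
Qed.

Lemma convsq_add_gt0 x : (forall i : 'I_(m.*2.+1), 0 < convsq x i) ->
  forall j l : 'I_m.+1, 0 < convsq x (j + l).
Proof. by move=> xx_gt0 j l; apply: (xx_gt0 (Ordinal (ltn_add_ord j l))). Qed.

Lemma cvg_convsq (u : nat -> 'I_m.+1 -> R) (a : 'I_m.+1 -> R) k :
  (forall j, (fun t => u t j) @ \oo --> a j) ->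
  (fun t => convsq (u t) k) @ \oo --> convsq a k.
Proof.
move=> u_cvg; have ext_cvg n : (fun t => ext (u t) n) @ \oo --> ext a n.
  by rewrite /ext; case: insub => [j|]; [exact: u_cvg | exact: cvg_cst].
by apply: cvg_big => [|i _]; [exact: add_continuous | apply: cvgM].
Qed.

End Convolution.

Section Divergence.
Variable R : realType.

Lemma mul_ln_le (p q : R) : 0 <= p -> 0 <= q -> (0 < p -> 0 < q) ->
  p * ln (q / p) <= q - p.
Proof.
rewrite le0r => /orP[/eqP-> q_ge0 _|p0 _ /(_ p0) q0]; first by rewrite mul0r subr0.
have := @le_ln1Dx R (q / p - 1); rewrite (addrC 1) subrK => /(_ _)/wrap[].
  by rewrite ltrBrDl subrr divr_gt0.
move=> le_ln; have -> : q - p = p * (q / p - 1) by field; rewrite gt_eqF.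
by rewrite ler_pM2l.
Qed.

Lemma gibbs_ineq (I : finType) (p q : I -> R) :
  (forall i, 0 <= p i) -> (forall i, 0 <= q i) -> (forall i, 0 < p i -> 0 < q i) ->
  \sum_i p i * ln (q i / p i) <= \sum_i q i - \sum_i p i.
Proof.
move=> hp hq hpq; rewrite -sumrB; apply: ler_sum => i _.
by apply: mul_ln_le; [exact: hp | exact: hq | exact: hpq].
Qed.

(* Since [ln 0 = 0], the terms with [y i = 0] reduce to [v i], matching the
   convention [0 log 0 = 0] of [Idiv]. *)
Definition Idivr n (y v : 'I_n -> R) : R := \sum_i (y i * ln (y i / v i) - y i + v i).

Lemma Idiv_Idivr n (y v : 'I_n -> R) :
  (forall i, 0 < y i -> 0 < v i) -> Idiv y v = (Idivr y v)%:E.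
Proof.
move=> hyv; rewrite /Idiv ifN; last first.
  by apply/existsPn => i; apply/negP => /andP[/hyv + /eqP v0]; rewrite v0 ltxx.
by congr EFin; apply: eq_bigr => i _; case: eqP => [->|]; rewrite ?mul0r.
Qed.

Lemma Idivr_term_ge0 (a b : R) : 0 <= a -> 0 <= b -> (0 < a -> 0 < b) ->
  0 <= a * ln (a / b) - a + b.
Proof.
move=> a_ge0 b_ge0 hab; have := mul_ln_le a_ge0 b_ge0 hab.
have [->|a_neq0] := eqVneq a 0; first by rewrite !mul0r; lra.
have a0 : 0 < a by rewrite lt0r a_neq0.
rewrite -[a / b]invf_div lnV ?posrE ?divr_gt0 ?hab // mulrN; lra.
Qed.

Variables (n : nat) (y : 'I_n -> R).
Hypothesis y_ge0 : forall i, 0 <= y i.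

Lemma Idivr_term_le (v : 'I_n -> R) i :
  (forall j, 0 < v j) -> y i * ln (y i / v i) - y i + v i <= Idivr y v.
Proof.
move=> v0; rewrite /Idivr (bigD1 i) //= lerDl; apply: sumr_ge0 => j _.
exact: Idivr_term_ge0 (y_ge0 j) (ltW (v0 j)) (fun=> v0 j).
Qed.

Lemma Idivr_ge0 (v : 'I_n -> R) : (forall j, 0 < v j) -> 0 <= Idivr y v.
Proof.
move=> v0; apply: sumr_ge0 => j _.
exact: Idivr_term_ge0 (y_ge0 j) (ltW (v0 j)) (fun=> v0 j).
Qed.

Variables (v : nat -> 'I_n -> R) (w : 'I_n -> R).
Hypothesis v_cvg : forall j, (fun k => v k j) @ \oo --> w j.

Lemma Idivr_bounded_lim_gt0 (M : R) i :
  (forall k j, 0 < v k j) -> (forall k, Idivr y (v k) <= M) -> 0 < y i -> 0 < w i.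
Proof.
(* The terms of [Idivr] are nonnegative, so the i-th one is at most M; this caps
   [ln (y i / v k i)] and keeps [v k i] above [b]. *)
move=> v0 vM yi0; pose b := y i / expR ((M + y i) / y i).
have b_le k : b <= v k i.
  have := le_trans (Idivr_term_le i (v0 k)) (vM k) => term_le.
  have vki := v0 k i.
  rewrite ler_pdivrMr ?expR_gt0 // -ler_pdivrMl //.
  rewrite mulrC -[y i / v k i]lnK ?posrE ?divr_gt0 // ler_expR ler_pdivlMr //; lra.
have b0 : 0 < b by rewrite divr_gt0 ?expR_gt0.
apply: lt_le_trans b0 _.
have b_le_near : \forall k \near \oo, b <= v k i by apply: nearW.
have closed_b : closed [set r : R | b <= r] := @closed_ge _ b.
by apply: (@closed_cvg nat _ \oo _ (fun k => v k i) _ closed_b b_le_near).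
Qed.

Lemma cvg_Idivr : (forall j, 0 < y j -> 0 < w j) ->
  (fun k => Idivr y (v k)) @ \oo --> Idivr y w.
Proof.
move=> w0; apply: cvg_big => [|j _]; first exact: add_continuous.
apply: cvgD; last exact: v_cvg.
apply: cvgB; last exact: cvg_cst.
have [->|yj_neq0] := eqVneq (y j) 0.
  by under eq_cvg do rewrite mul0r; rewrite mul0r; exact: cvg_cst.
have yj0 : 0 < y j by rewrite lt0r yj_neq0 y_ge0.
apply: cvgM; first exact: cvg_cst.
have ratio_cvg : (fun k => y j / v k j) @ \oo --> y j / w j.
  apply: cvgM; first exact: cvg_cst.
  by apply: cvgV; [rewrite gt_eqF ?w0 | exact: v_cvg].
exact: cvg_comp _ _ ratio_cvg (continuous_ln (divr_gt0 yj0 (w0 j yj0))).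
Qed.

End Divergence.

Lemma cvg_subseq (T : topologicalType) (u : nat -> T) (phi : nat -> nat) (l : T) :
  (forall k, (phi k < phi k.+1)%N) -> u @ \oo --> l -> (u \o phi) @ \oo --> l.
Proof.
move=> phi_incr ul; apply: cvg_comp ul; apply/cvgnyPge => A.
have phi_ge k : (k <= phi k)%N by elim: k => // k ih; exact: leq_ltn_trans ih (phi_incr k).
by apply: filterS (nbhs_infty_ge A) => k /leq_trans; apply.
Qed.

Section EMStep.
Variables (R : realType) (m : nat) (y : 'I_(m.*2.+1) -> R) (c : R) (x x' : 'I_m.+1 -> R).
Hypotheses (y_ge0 : forall i, 0 <= y i) (c_gt0 : 0 < c) (c2 : c ^+ 2 = \sum_i y i).
Hypotheses (x_ge0 : forall j, 0 <= x j)
  (xx_gt0 : forall i : 'I_(m.*2.+1), 0 < convsq x i)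
  (x'x'_gt0 : forall i : 'I_(m.*2.+1), 0 < convsq x' i)
  (x'E : forall j, x' j =
     x j * (c^-1 * \sum_(l < m.+1) x l * ext y (l + j) / convsq x (l + j))).

Let a (j l : 'I_m.+1) := ext y (j + l) / convsq x (j + l) * (x j * x l).

Let a_ge0 j l : 0 <= a j l.
Proof.
by rewrite !mulr_ge0 ?invr_ge0 ?ext_ge0 ?(ltW (convsq_add_gt0 xx_gt0 j l)).
Qed.

Let a_sym j l : a j l = a l j.
Proof. by rewrite /a addnC [x j * _]mulrC. Qed.

Lemma sum_weight_row j : \sum_l a j l = c * x' j.
Proof.
rewrite x'E mulrCA (mulrA c) mulfV ?gt_eqF // mul1r mulr_sumr.
by apply: eq_bigr => l _; rewrite /a addnC; ring.
Qed.

Lemma sum_weight : \sum_j \sum_l a j l = c ^+ 2.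
Proof. by rewrite c2; apply: sum_ratio_convsq. Qed.

Lemma sum_step : \sum_j x' j = c.
Proof.
apply: (mulfI (lt0r_neq0 c_gt0)); rewrite -expr2 -sum_weight mulr_sumr.
by apply: eq_bigr => j _; rewrite sum_weight_row.
Qed.

Lemma step_ge0 j : 0 <= x' j.
Proof.
rewrite -(pmulr_rge0 _ c_gt0) -sum_weight_row; apply: sumr_ge0 => l _; exact: a_ge0.
Qed.

Lemma step_gt0_prev j : 0 < x' j -> 0 < x j.
Proof.
rewrite !lt0r x_ge0 andbT => /andP[+ _]; apply: contra => /eqP xj0.
by rewrite x'E xj0 mul0r.
Qed.

Lemma weight_gt0 j l : 0 < a j l -> 0 < x' j.
Proof.
move=> ajl; rewrite -(pmulr_rgt0 _ c_gt0) -sum_weight_row.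
by apply: lt_le_trans ajl _; rewrite (bigD1 l) //= lerDl sumr_ge0.
Qed.

Let q (j l : 'I_m.+1) := ext y (j + l) / convsq x' (j + l) * (x' j * x' l).
Let S := \sum_j x j.
Let P := \sum_j x' j * ln (x' j / x j).
Let D := \sum_(i < m.*2.+1) y i * ln (convsq x i / convsq x' i).

Let S_gt0 : 0 < S.
Proof.
have S_ge0 : 0 <= S by apply: sumr_ge0.
have : 0 < S ^+ 2.
  rewrite -sum_convsq (bigD1 ord0) //=; apply: lt_le_trans (xx_gt0 ord0) _.
  by rewrite lerDl sumr_ge0 // => i _; apply: ltW.
nra.
Qed.

Lemma weight_gt0_factors j l :
  0 < a j l -> [/\ 0 < ext y (j + l), 0 < x' j & 0 < x' l].
Proof.
move=> ajl; split; [|exact: weight_gt0 ajl | by apply: (@weight_gt0 l j); rewrite -a_sym].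
rewrite lt0r ext_ge0 // andbT; apply: contraTneq ajl => y0.
by rewrite /a y0 !mul0r ltxx.
Qed.

Lemma weight_ln j l : a j l * ln (q j l / a j l) =
  a j l * (ln (x' j / x j) + ln (x' l / x l) + ln (convsq x (j + l) / convsq x' (j + l))).
Proof.
have [->|a_neq0] := eqVneq (a j l) 0; first by rewrite !mul0r.
have /weight_gt0_factors[yjl x'j x'l] : 0 < a j l by rewrite lt0r a_neq0 a_ge0.
have [xj xl] := (step_gt0_prev x'j, step_gt0_prev x'l).
have [vjl v'jl] := (convsq_add_gt0 xx_gt0 j l, convsq_add_gt0 x'x'_gt0 j l).
have -> : q j l / a j l =
    x' j / x j * (x' l / x l) * (convsq x (j + l) / convsq x' (j + l)).
  by rewrite /q /a; field; rewrite !gt_eqF.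
by rewrite !lnM ?posrE ?mulr_gt0 ?invr_gt0.
Qed.

Lemma pair_gibbs : 2 * c * P + D <= 0.
Proof.
have q_ge0 j l : 0 <= q j l.
  by rewrite !mulr_ge0 ?invr_ge0 ?ext_ge0 ?step_ge0 ?(ltW (convsq_add_gt0 x'x'_gt0 j l)).
have q_gt0 j l : 0 < a j l -> 0 < q j l.
  move=> /weight_gt0_factors[yjl x'j x'l].
  by rewrite !mulr_gt0 ?invr_gt0 ?(convsq_add_gt0 x'x'_gt0 j l).
have := @gibbs_ineq _ _ (fun p => a p.1 p.2) (fun p => q p.1 p.2)
  (fun p => a_ge0 p.1 p.2) (fun p => q_ge0 p.1 p.2) (fun p => q_gt0 p.1 p.2).
rewrite -(pair_bigA _ (fun j l => a j l * ln (q j l / a j l))) -!pair_bigA /=.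
rewrite (sum_ratio_convsq y x'x'_gt0) sum_weight -c2 subrr.
suff -> : 2 * c * P + D = \sum_j \sum_l a j l * ln (q j l / a j l) by [].
under eq_bigr do under eq_bigr do rewrite weight_ln !mulrDr.
under eq_bigr do rewrite !big_split.
rewrite !big_split /=.
have row_sum : \sum_j \sum_l a j l * ln (x' j / x j) = c * P.
  rewrite /P mulr_sumr; apply: eq_bigr => j _.
  by rewrite -mulr_suml sum_weight_row mulrA.
have col_sum : \sum_j \sum_l a j l * ln (x' l / x l) = c * P.
  rewrite exchange_big -row_sum; apply: eq_bigr => l _.
  by apply: eq_bigr => j _; rewrite a_sym.
have diag_sum : \sum_j \sum_l a j l * ln (convsq x (j + l) / convsq x' (j + l)) = D.
  pose f k := ext y k / convsq x k * ln (convsq x k / convsq x' k).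
  transitivity (\sum_(i < m.*2.+1) f i * convsq x i).
    by rewrite sum_mul_convsq; apply: eq_bigr => j _; apply: eq_bigr => l _; rewrite mulrAC.
  by apply: eq_bigr => i _; rewrite /f ext_ord mulrAC divfK // gt_eqF.
rewrite row_sum col_sum diag_sum; ring.
Qed.

Lemma log_sum_gibbs : c * ln (c / S) <= P.
Proof.
have S0 := S_gt0.
have q_ge0 j : 0 <= x j * (c / S) by rewrite mulr_ge0 ?divr_ge0 ?x_ge0 ?(ltW c_gt0) ?(ltW S0).
have q_gt0 j : 0 < x' j -> 0 < x j * (c / S).
  by move=> /step_gt0_prev xj; rewrite mulr_gt0 ?divr_gt0.
have := gibbs_ineq step_ge0 q_ge0 q_gt0.
rewrite -mulr_suml -/S (mulrC S) divfK ?gt_eqF // sum_step subrr.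
suff -> : \sum_j x' j * ln (x j * (c / S) / x' j) = c * ln (c / S) - P by rewrite subr_le0.
rewrite -{2}sum_step mulr_suml /P -sumrB; apply: eq_bigr => j _.
have [->|x'j_neq0] := eqVneq (x' j) 0; first by rewrite !mul0r subr0.
have x'j : 0 < x' j by rewrite lt0r x'j_neq0 step_ge0.
have xj := step_gt0_prev x'j.
rewrite -mulrBr -ln_div ?posrE ?divr_gt0 //; congr (_ * ln _).
by field; rewrite !gt_eqF.
Qed.

Lemma Idivr_step :
  Idivr y (fun i => convsq x' i) = Idivr y (fun i => convsq x i) + D + c ^+ 2 - S ^+ 2.
Proof.
rewrite -{1}sum_step -!sum_convsq /Idivr /D -!big_split -sumrB; apply: eq_bigr => i _ /=.
have [->|yi_neq0] := eqVneq (y i) 0; first by rewrite !mul0r; ring.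
have yi : 0 < y i by rewrite lt0r yi_neq0 y_ge0.
have [vi v'i] := (xx_gt0 i, x'x'_gt0 i).
have -> : y i / convsq x' i = y i / convsq x i * (convsq x i / convsq x' i).
  by field; rewrite !gt_eqF.
rewrite lnM ?posrE ?divr_gt0 //; ring.
Qed.

Lemma Idivr_step_le :
  Idivr y (fun i => convsq x' i) <= Idivr y (fun i => convsq x i).
Proof.
have S0 := S_gt0.
have hD := pair_gibbs.
have hP : c * (c * ln (c / S)) <= c * P by rewrite ler_pM2l ?log_sum_gibbs.
have hS : c ^+ 2 * ln (S ^+ 2 / c ^+ 2) <= S ^+ 2 - c ^+ 2.
  by apply: mul_ln_le; rewrite ?sqr_ge0 // => _; rewrite exprn_gt0.
rewrite -[S ^+ 2 / c ^+ 2]invf_div -expr_div_n lnV ?lnXn ?posrE ?exprn_gt0 ?divr_gt0 // in hS.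
(* D <= -2cP <= -2c^2 ln (c/S) = c^2 ln (S^2/c^2) <= S^2 - c^2 *)
rewrite Idivr_step; lra.
Qed.

End EMStep.

Section Iteration.
Variables (R : realType) (m : nat) (y : 'I_(m.*2.+1) -> R) (c : R) (x : nat -> 'I_m.+1 -> R).
Hypotheses (y_ge0 : forall i, 0 <= y i) (c_gt0 : 0 < c) (c2 : c ^+ 2 = \sum_i y i).
Hypotheses (x0_ge0 : forall j, 0 <= x 0%N j)
  (xx_gt0 : forall t (i : 'I_(m.*2.+1)), 0 < convsq (x t) i)
  (x_rec : forall t j, x t.+1 j =
     x t j * (c^-1 * \sum_(l < m.+1) x t l * ext y (l + j) / convsq (x t) (l + j))).

Lemma iter_ge0 t j : 0 <= x t j.
Proof.
elim: t j => // t ih j.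
exact: step_ge0 y_ge0 c_gt0 ih (xx_gt0 t) (x_rec t) j.
Qed.

Lemma Idivr_iter_nonincreasing :
  nonincreasing_seq (fun t => Idivr y (fun i => convsq (x t) i)).
Proof.
apply/nonincreasing_seqP => t.
exact: Idivr_step_le y_ge0 c_gt0 c2 (iter_ge0 t) (xx_gt0 t) (xx_gt0 t.+1) (x_rec t).
Qed.

End Iteration.

Section LimitPoints.
Variables (R : realType) (m : nat) (y : 'I_(m.*2.+1) -> R) (u : nat -> 'I_m.+1 -> R).
Hypotheses (y_ge0 : forall i, 0 <= y i)
  (uu_gt0 : forall t (i : 'I_(m.*2.+1)), 0 < convsq (u t) i).
Let F t := Idivr y (fun i => convsq (u t) i).
Hypothesis F_nonincreasing : nonincreasing_seq F.

Lemma Idiv_limit_point a :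
  seq_limit_point u a -> Idiv y (fun i => convsq a i) = (limn F)%:E.
Proof.
move=> [phi [phi_incr u_phi_cvg]].
have F_ge0 t : 0 <= F t by apply: Idivr_ge0.
have F_cvg : F @ \oo --> limn F.
  by apply/cvg_ex; exists (inf (range F)); apply: nonincreasing_cvgn => //; exists 0 => _ [t _ <-].
have v_cvg (i : 'I_(m.*2.+1)) : (fun k => convsq (u (phi k)) i) @ \oo --> convsq a i.
  exact: cvg_convsq.
have F_phi_le k : F (phi k) <= F 0%N by apply: F_nonincreasing.
have a_pos i : 0 < y i -> 0 < convsq a i.
  exact: (@Idivr_bounded_lim_gt0 _ _ _ y_ge0 (fun k i => convsq (u (phi k)) i) _ v_cvg _ i
    (fun k => uu_gt0 (phi k)) F_phi_le).
rewrite Idiv_Idivr //; congr EFin.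
exact: cvg_unique _ (cvg_Idivr y_ge0 v_cvg a_pos) (cvg_subseq phi_incr F_cvg).
Qed.

End LimitPoints.

Unset Implicit Arguments.

Theorem proposition5 (R : realType) (m : nat) (hm : (1 <= m)%N)
  (y : 'I_(m.*2.+1) -> R) (hy : forall i, 0 <= y i)
  (hc : 0 < Num.sqrt (\sum_i y i))
  (x : nat -> 'I_m.+1 -> R) (hx0 : forall j, 0 <= x 0%N j)
  (hwd : forall (t : nat) (i : 'I_(m.*2.+1)), 0 < convsq (x t) i)
  (hrec : forall (t : nat) (j : 'I_m.+1),
     x t.+1 j = x t j * ((Num.sqrt (\sum_i y i))^-1 *
       \sum_(l < m.+1) x t l * ext y (l + j) / convsq (x t) (l + j))) :
  forall a b : 'I_m.+1 -> R, seq_limit_point x a -> seq_limit_point x b ->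
    Idiv y (fun i => convsq a i) = Idiv y (fun i => convsq b i).
Proof.
have c2 : Num.sqrt (\sum_i y i) ^+ 2 = \sum_i y i by rewrite sqr_sqrtr // sumr_ge0.
have F_nonincreasing := Idivr_iter_nonincreasing hy hc c2 hx0 hwd hrec.
have limit_value := Idiv_limit_point hy hwd F_nonincreasing.
by move=> a b /limit_value -> /limit_value ->.
Qed.
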